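(* Under the standing setting below, assume moreover the regularity condition: there exists $c_r>0$ with $\|\nabla_y g(x,y)\|\le c_r\|\nabla h(x,y)\|$ for all $(x,y)$. Take $\rho(x,y)=\|\nabla h(x,y)\|^2$ and $C_0>0$; for an integer $K\ge1$ set $\alpha=K^{-1/3}$, $\gamma=\min\{\alpha,\frac{1}{L_f+\alpha L_h}\}$, let $(x_0,y_0)$ satisfy $h(x_0,y_0)\le\alpha^2C_0$, and run the Algorithm. Then for every $\epsilon>0$ there is $K=\mathcal{O}(\epsilon^{-3/2})$ such that some $t\in\{0,\dots,K-1\}$ satisfies $$\max\{\|\nabla_y g(x_t,y_t)\|^2,\ \|\nabla f_t+\lambda_t\nabla h_t\|^2\}\le\epsilon,$$ i.e. $(x_t,y_t,\lambda_t)$ is an $\epsilon$-KKT point of $\min_{(x,y)} f(x,y)$ s.t. $h(x,y)=0$.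
   Context: Standing setting. $f,g:\mathbb{R}^n\times\mathbb{R}^m\to\mathbb{R}$. $f$ is continuously differentiable, $\bar f:=\inf f>-\infty$, $\nabla f$ is $L_f$-Lipschitz, and $\|\nabla f\|\le C_f$ everywhere. $g$ is twice continuously differentiable, and $h(x,y):=\|\nabla_y g(x,y)\|^2$ is continuously differentiable with $\nabla h$ being $L_h$-Lipschitz ($L_h>0$). Write $\nabla h=(\nabla_x h,\nabla_y h)$, $f_k=f(x_k,y_k)$, $h_k=h(x_k,y_k)$, $\nabla f_k=\nabla f(x_k,y_k)$, $\nabla h_k=\nabla h(x_k,y_k)$, etc. Given $\rho\ge0$, $\alpha,\gamma>0$, $(x_0,y_0)$, the Algorithm iterates for $k\ge0$: $\lambda_k=\big[-\nabla_x h_k^\top\nabla_x f_k-\nabla_y h_k^\top\nabla_y f_k+\alpha\rho(x_k,y_k)\big]_+/(\|\nabla_x h_k\|^2+\|\nabla_y h_k\|^2)$ if $\nabla h_k\ne0$, $\lambda_k=0$ otherwise; $\Delta_k^x=-\nabla_x f_k-\lambda_k\nabla_x h_k$, $\Delta_k^y=-\nabla_y f_k-\lambda_k\nabla_y h_k$; $x_{k+1}=x_k+\gamma\Delta_k^x$, $y_{k+1}=y_k+\gamma\Delta_k^y$. A triple $(x,y,\lambda)\in\mathbb{R}^n\times\mathbb{R}^m\times\mathbb{R}$ is an $\epsilon$-KKT point of $\min f$ s.t. $h=0$ if $h(x,y)\le\epsilon$ and $\|\nabla f(x,y)+\lambda\nabla h(x,y)\|^2\le\epsilon$. *)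

From HB Require Import structures.
From mathcomp Require Import all_boot all_order all_algebra.
From mathcomp Require Import all_classical all_reals all_analysis.
Set Implicit Arguments. Unset Strict Implicit. Unset Printing Implicit Defensive.
Import Order.TTheory GRing.Theory Num.Theory.
Import numFieldNormedType.Exports.
Local Open Scope ring_scope.

Section Defs.
Variable R : realType.
Variables n m : nat.

Definition E := ('rV[R]_n * 'rV[R]_m)%type.

Definition dotr k (u v : 'rV[R]_k) : R := \sum_(i < k) u 0 i * v 0 i.
Definition nsqr k (u : 'rV[R]_k) : R := dotr u u.

Definition dotE (p q : E) : R := dotr p.1 q.1 + dotr p.2 q.2.
Definition nsq (p : E) : R := dotE p p.
Definition nrm (p : E) : R := Num.sqrt (nsq p).

Definition is_gradient (F : E -> R) (G : E -> E) : Prop :=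
  forall p, differentiable F p /\ forall u, 'd F p u = dotE (G p) u.

(* Continuous differentiability of a vector field G : E -> E
   (differentiable everywhere, derivative continuous in the point;
   in finite dimension continuity of p |-> 'd G p u for each u is
   equivalent to continuity of p |-> 'd G p in operator norm). *)
Definition C1_field (G : E -> E) : Prop :=
  (forall p, differentiable G p) /\ (forall u, continuous (fun p => 'd G p u)).

Definition lipschitz_field (G : E -> E) (L : R) : Prop :=
  forall p q, nrm (G p - G q) <= L * nrm (p - q).

Definition alg_lambda (Gf Gh : E -> E) (rho : E -> R) (alpha : R) (p : E) : R :=
  if Gh p == 0 then 0
  else Num.max 0 (- dotr (Gh p).1 (Gf p).1 - dotr (Gh p).2 (Gf p).2
                  + alpha * rho p)
       / (nsqr (Gh p).1 + nsqr (Gh p).2).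

Definition alg_step (Gf Gh : E -> E) (rho : E -> R) (alpha gamma : R) (p : E) : E :=
  let lam := alg_lambda Gf Gh rho alpha p in
  (p.1 + gamma *: (- (Gf p).1 - lam *: (Gh p).1),
   p.2 + gamma *: (- (Gf p).2 - lam *: (Gh p).2)).

Definition alg_iter (Gf Gh : E -> E) (rho : E -> R) (alpha gamma : R)
  (p0 : E) (k : nat) : E := iter k (alg_step Gf Gh rho alpha gamma) p0.

End Defs.

From HB Require Import structures.
From mathcomp Require Import all_boot all_order all_algebra.
From mathcomp Require Import all_classical all_reals all_analysis.
From mathcomp Require Import ring lra.
Import Order.TTheory GRing.Theory Num.Theory.
Import numFieldNormedType.Exports.
Local Open Scope ring_scope.

(* The multiplier is chosen so that the direction d_k = -(grad f + lambda_k grad h)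
   satisfies <grad h, d_k> <= -alpha |grad h|^2 and <grad f, d_k> + |d_k|^2 <= O(alpha).
   By the descent lemma, the merit function f + (alpha + 1/(2 L_h gamma)) h then
   decreases by gamma |d_k|^2 / 4 up to an O(gamma^2 alpha) error, while h alone
   decreases by gamma alpha |grad h_k|^2 up to O(gamma^2 |d_k|^2).  Telescoping over
   K steps, with alpha^3 K = 1 and gamma of order alpha, bounds
   alpha * sum_k (c_r^2 |grad h_k|^2 + |d_k|^2) by a constant, so some iterate has
   residual O(1 / (alpha K)) = O(alpha^2) <= eps once K ~ eps^(-3/2).  The
   regularity condition turns |grad_y g|^2 into at most c_r^2 |grad h|^2. *)

Section RealFacts.
Context {R : realFieldType}.

Lemma mulr_le_young (x y : R) {t : R} : 0 < t ->
  x * y <= t / 2 * x ^+ 2 + y ^+ 2 / (2 * t).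
Proof.
move=> t_gt0; rewrite -subr_ge0.
have -> : t / 2 * x ^+ 2 + y ^+ 2 / (2 * t) - x * y = (t * x - y) ^+ 2 / (2 * t).
  by field; rewrite gt_eqF.
by rewrite divr_ge0 ?sqr_ge0 // ltW // mulr_gt0.
Qed.

Lemma telescope_le (u v w : nat -> R) K :
  (forall k, u k.+1 + v k <= u k + w k) ->
  u K + \sum_(0 <= k < K) v k <= u 0%N + \sum_(0 <= k < K) w k.
Proof.
move=> step; elim: K => [|K IH]; first by rewrite !big_geq.
by rewrite !big_nat_recr //=; have := step K; lra.
Qed.

Lemma exists_le_mean {v : nat -> R} {K : nat} {S : R} : (0 < K)%N ->
  \sum_(0 <= k < K) v k <= S -> exists2 t, (t < K)%N & v t <= S / K%:R.
Proof.
move=> K_gt0 sum_le.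
have /hasP[t] : has (fun t => v t <= S / K%:R) (iota 0 K).
  apply/negPn/negP => /hasPn v_gt.
  have : \sum_(0 <= k < K) (S / K%:R) < \sum_(0 <= k < K) v k.
    apply: ltr_sum_nat => // k /andP[_ kK].
    by rewrite ltNge; apply: v_gt; rewrite mem_iota.
  rewrite sumr_const_nat subn0 -[_ *+ K]mulr_natr divfK ?pnatr_eq0 -?lt0n //; lra.
by rewrite mem_iota => /andP[_ tK] vt; exists t.
Qed.

End RealFacts.

Lemma le_sqr_of_sqrtr_le {R : rcfType} (x y : R) : 0 <= x -> Num.sqrt x <= y -> x <= y ^+ 2.
Proof.
move=> x_ge0 sqrt_le; have y_ge0 := le_trans (sqrtr_ge0 x) sqrt_le.
by rewrite -[x]sqr_sqrtr // ler_pXn2r ?nnegrE ?sqrtr_ge0.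
Qed.

Section InnerProduct.
Context {R : realType} {n m : nat}.

Lemma dotrC {k} (u v : 'rV[R]_k) : dotr u v = dotr v u.
Proof. by apply: eq_bigr => i _; rewrite mulrC. Qed.

Lemma dotrDl {k} (u v w : 'rV[R]_k) : dotr (u + v) w = dotr u w + dotr v w.
Proof. by rewrite /dotr -big_split; apply: eq_bigr => i _; rewrite mxE mulrDl. Qed.

Lemma dotrZl {k} a (u w : 'rV[R]_k) : dotr (a *: u) w = a * dotr u w.
Proof. by rewrite /dotr mulr_sumr; apply: eq_bigr => i _; rewrite mxE mulrA. Qed.

Lemma dotr_ge0 {k} (u : 'rV[R]_k) : 0 <= dotr u u.
Proof. by apply: sumr_ge0 => i _; rewrite -expr2 sqr_ge0. Qed.

Implicit Types (p q w : E R n m) (a : R).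

Lemma dotEC p q : dotE p q = dotE q p.
Proof. by rewrite /dotE dotrC [dotr p.2 _]dotrC. Qed.

Lemma dotEDl p q w : dotE (p + q) w = dotE p w + dotE q w.
Proof. by rewrite /dotE !dotrDl addrACA. Qed.

Lemma dotEZl a p w : dotE (a *: p) w = a * dotE p w.
Proof. by rewrite /dotE !dotrZl mulrDr. Qed.

Lemma dotENl p w : dotE (- p) w = - dotE p w.
Proof. by rewrite -scaleN1r dotEZl mulN1r. Qed.

Lemma dotEDr p q w : dotE w (p + q) = dotE w p + dotE w q.
Proof. by rewrite dotEC dotEDl !(dotEC w). Qed.

Lemma dotEZr a p w : dotE w (a *: p) = a * dotE w p.
Proof. by rewrite dotEC dotEZl dotEC. Qed.

Lemma dotENr p w : dotE w (- p) = - dotE w p.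
Proof. by rewrite dotEC dotENl dotEC. Qed.

Lemma dotE0l w : dotE 0 w = 0.
Proof. by rewrite -(scale0r (0 : E R n m)) dotEZl mul0r. Qed.

Lemma nsq_ge0 p : 0 <= nsq p.
Proof. by rewrite /nsq /dotE addr_ge0 // dotr_ge0. Qed.

Lemma nrm_ge0 p : 0 <= nrm p.
Proof. exact: sqrtr_ge0. Qed.

Lemma sqr_nrm p : nrm p ^+ 2 = nsq p.
Proof. by rewrite /nrm sqr_sqrtr // nsq_ge0. Qed.

Lemma nsqZ a p : nsq (a *: p) = a ^+ 2 * nsq p.
Proof. by rewrite /nsq dotEZl dotEZr mulrA expr2. Qed.

Lemma nsqN p : nsq (- p) = nsq p.
Proof. by rewrite /nsq dotENl dotENr opprK. Qed.

Lemma nrmZ a p : nrm (a *: p) = `|a| * nrm p.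
Proof. by rewrite /nrm nsqZ sqrtrM ?sqr_ge0 // sqrtr_sqr. Qed.

Lemma nsqDZ p q a :
  nsq (p + a *: q) = nsq p + 2 * a * dotE p q + a ^+ 2 * nsq q.
Proof.
rewrite /nsq !dotEDl !dotEDr !dotEZl !dotEZr (dotEC q p); ring.
Qed.

Lemma sqr_dotE_le p q : dotE p q ^+ 2 <= nsq p * nsq q.
Proof.
set d := dotE p q; set P := nsq p; set Q := nsq q.
have quad t : 0 <= Q + 2 * t * d + t ^+ 2 * P.
  by rewrite /d dotEC -nsqDZ nsq_ge0.
have [P0|P_neq0] := eqVneq P 0.
  have [->|d_neq0] := eqVneq d 0; first by rewrite P0; lra.
  have := quad (- (Q + 1) / (2 * d)); rewrite P0 mulr0 addr0.
  have -> : 2 * (- (Q + 1) / (2 * d)) * d = - (Q + 1) by field.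
  lra.
have P_gt0 : 0 < P by rewrite lt0r P_neq0 nsq_ge0.
have := mulr_ge0 (ltW P_gt0) (quad (- d / P)).
have -> : P * (Q + 2 * (- d / P) * d + (- d / P) ^+ 2 * P) = P * Q - d ^+ 2.
  by field.
lra.
Qed.

Lemma normr_dotE_le p q : `|dotE p q| <= nrm p * nrm q.
Proof.
rewrite -[X in X <= _]sqrtr_sqr /nrm -sqrtrM ?nsq_ge0 //.
by rewrite ler_sqrt ?mulr_ge0 ?nsq_ge0 // sqr_dotE_le.
Qed.

End InnerProduct.

Section DescentLemma.
Context {R : realType} {n m : nat}.
Context {F : E R n m -> R} {G : E R n m -> E R n m}.
Hypothesis gradF : is_gradient F G.

Lemma is_derive_along (p d : E R n m) (t : R) :
  is_derive t (1 : R) (fun s : R => F (p + s *: d)) (dotE (G (p + t *: d)) d).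
Proof.
have [dF dFE] := gradF (p + t *: d).
have quotE : (fun s : R => s^-1 *: (((fun s => F (p + s *: d)) \o shift t) (s *: 1)
                                   - F (p + t *: d)))
    = (fun s => s^-1 *: ((F \o shift (p + t *: d)) (s *: d) - F (p + t *: d))).
  apply: funext => s /=; congr (_ *: (F _ - _)).
  by rewrite /shift /= [s%:A]mulr1 scalerDl addrCA.
split.
  by have := diff_derivable (v := d) dF; rewrite /derivable -quotE.
by rewrite /derive quotE -/(derive F (p + t *: d) d) deriveE // dFE.
Qed.

Lemma descent_lemma {L : R} : lipschitz_field G L -> 0 <= L ->
  forall p d, F (p + d) <= F p + dotE (G p) d + L / 2 * nsq d.
Proof.
move=> lipG L_ge0 p d.
set c1 := dotE (G p) d; set c2 := L / 2 * nsq d.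
(* mean value theorem on [psi] over [0, 1]; Lipschitz continuity of [G] makes [psi'] <= 0 *)
pose psi := (fun s : R => F (p + s *: d)) - (c1 \*: id) - (c2 \*: (id * id)).
have dpsi (s : R) : is_derive s (1 : R) psi
    (dotE (G (p + s *: d)) d - c1 *: (1 : R) - c2 *: (s *: (1 : R) + s *: (1 : R))).
  by apply: is_deriveB; apply: is_deriveB; apply: is_derive_along.
have [c c01 psiE] := MVT ltr01 (fun s _ => dpsi s)
  (derivable_within_continuous (fun s _ => @ex_derive _ _ _ _ _ _ _ (dpsi s))).
have c_ge0 : 0 <= c by move: c01; rewrite in_itv /= => /andP [/ltW].
have dpsi_le : dotE (G (p + c *: d)) d - c1 <= L * c * nsq d.
  rewrite /c1 -dotENl -dotEDl.
  apply: le_trans (ler_norm _) _; apply: le_trans (normr_dotE_le _ _) _.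
  apply: (@le_trans _ _ (L * nrm (p + c *: d - p) * nrm d)).
    by rewrite ler_wpM2r ?nrm_ge0 ?lipG.
  by rewrite addrC addKr nrmZ ger0_norm // -sqr_nrm; lra.
have scaleE (a b : R) : a *: b = a * b by [].
have c2E : c2 * (c + c) = L * c * nsq d by rewrite /c2; field.
move: psiE; rewrite /psi !fctE /= !scaleE scale1r scale0r addr0.
rewrite !mulr1 !mul0r !mulr0 !subr0 c2E; lra.
Qed.

End DescentLemma.

Section Multiplier.
Context {R : realType}.
Variables (a r al : R).
Hypothesis r_gt0 : 0 < r.
Local Notation lam := (Num.max 0 (- a + al * r) / r).

Lemma multiplier_descent : - a - lam * r <= - (al * r).
Proof.
rewrite divfK ?gt_eqF //.
have : - a + al * r <= Num.max 0 (- a + al * r) by rewrite le_max lexx orbT.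
lra.
Qed.

Lemma multiplier_identity : lam * a + lam ^+ 2 * r = al * Num.max 0 (- a + al * r).
Proof.
case: (lerP (- a + al * r) 0) => _; first by rewrite !mul0r expr0n /= mul0r addr0 mulr0.
by field; rewrite gt_eqF.
Qed.

End Multiplier.

Section SearchDirection.
Context {R : realType} {n m : nat}.
Implicit Types (Gf Gh : E R n m -> E R n m) (p : E R n m).

Definition alg_dir Gf Gh rho (al : R) p : E R n m :=
  - Gf p - alg_lambda Gf Gh rho al p *: Gh p.

Lemma alg_stepE Gf Gh rho al ga p :
  alg_step Gf Gh rho al ga p = p + ga *: alg_dir Gf Gh rho al p.
Proof. by []. Qed.

Lemma alg_iterS Gf Gh rho al ga p0 k :
  alg_iter Gf Gh rho al ga p0 k.+1
  = alg_iter Gf Gh rho al ga p0 k + ga *: alg_dir Gf Gh rho al (alg_iter Gf Gh rho al ga p0 k).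
Proof. by rewrite /alg_iter iterS alg_stepE. Qed.

Lemma dotE_nsq_eq0 p q : nsq p = 0 -> dotE p q = 0.
Proof.
move=> p0; apply/normr0_eq0/eqP; rewrite eq_le normr_ge0 andbT.
by have := normr_dotE_le p q; rewrite /nrm p0 sqrtr0 mul0r.
Qed.

Context (Gf Gh : E R n m -> E R n m) (al : R).
Local Notation rho := (fun p => nsq (Gh p)).
Local Notation lam p := (alg_lambda Gf Gh rho al p).

(* [x / 0 = 0] makes the formula valid also where [Gh p = 0]. *)
Lemma alg_lambdaE p :
  lam p = Num.max 0 (- dotE (Gh p) (Gf p) + al * nsq (Gh p)) / nsq (Gh p).
Proof.
rewrite /alg_lambda; case: eqP => [->|_]; last by rewrite opprD.
by rewrite /nsq !dotE0l invr0 mulr0.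
Qed.

Lemma dotE_grad_dir p :
  dotE (Gh p) (alg_dir Gf Gh rho al p) <= - (al * nsq (Gh p)).
Proof.
rewrite /alg_dir dotEDr dotENr dotENr dotEZr -/(nsq (Gh p)) alg_lambdaE.
have [r0|r_neq0] := eqVneq (nsq (Gh p)) 0.
  by rewrite r0 dotE_nsq_eq0 // !mulr0 oppr0 addr0.
have r_gt0 : 0 < nsq (Gh p) by rewrite lt0r r_neq0 nsq_ge0.
exact: multiplier_descent.
Qed.

Lemma dotE_dir_nsq_le {Cf : R} p : 0 <= al -> nrm (Gf p) <= Cf ->
  dotE (Gf p) (alg_dir Gf Gh rho al p) + nsq (alg_dir Gf Gh rho al p)
  <= al * (Cf * nrm (Gh p) + al * nsq (Gh p)).
Proof.
move=> al_ge0 Gf_le; have Cf_ge0 : 0 <= Cf := le_trans (nrm_ge0 _) Gf_le.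
have -> : dotE (Gf p) (alg_dir Gf Gh rho al p) + nsq (alg_dir Gf Gh rho al p)
          = lam p * dotE (Gh p) (Gf p) + lam p ^+ 2 * nsq (Gh p).
  rewrite /alg_dir -opprD nsqN nsqDZ dotENr dotEDr dotEZr (dotEC (Gf p)).
  rewrite /nsq; ring.
rewrite alg_lambdaE.
have [r0|r_neq0] := eqVneq (nsq (Gh p)) 0.
  rewrite r0 invr0 !mulr0 mul0r !addr0.
  by rewrite !mulr_ge0 ?nrm_ge0.
rewrite multiplier_identity ?lt0r ?r_neq0 ?nsq_ge0 // ler_wpM2l //.
rewrite ge_max addr_ge0 ?mulr_ge0 ?nrm_ge0 ?nsq_ge0 //=.
have := le_trans (normr_dotE_le _ _) (ler_wpM2l (nrm_ge0 (Gh p)) Gf_le).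
have := ler_norm (- dotE (Gh p) (Gf p)); rewrite normrN; lra.
Qed.

End SearchDirection.

Definition energy_bound {R : realType} (kap Cf Lh C0 Delta : R) :=
  Delta + C0 + C0 / (2 * Lh * kap) + Cf ^+ 2 * Lh / 2.

Definition rate_const {R : realType} (kap Cf Lh cr C0 Delta : R) :=
  cr ^+ 2 * (C0 / kap + 2 * Lh * energy_bound kap Cf Lh C0 Delta)
  + 4 * energy_bound kap Cf Lh C0 Delta / kap.

Section Convergence.
Context {R : realType} {n m : nat}.
Context {f h : E R n m -> R} {Gf Gh : E R n m -> E R n m}.
Context {fbar Lf Cf Lh al ga : R} {p0 : E R n m}.
Hypotheses (gradf : is_gradient f Gf) (lipf : lipschitz_field Gf Lf) (Lf_ge0 : 0 <= Lf).
Hypotheses (f_ge : forall p, fbar <= f p) (Gf_le : forall p, nrm (Gf p) <= Cf).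
Hypotheses (gradh : is_gradient h Gh) (liph : lipschitz_field Gh Lh) (Lh_gt0 : 0 < Lh).
Hypothesis h_ge0 : forall p, 0 <= h p.
Hypotheses (al_gt0 : 0 < al) (ga_gt0 : 0 < ga) (ga_small : ga * (Lf + al * Lh) <= 1).

Local Notation rho := (fun p => nsq (Gh p)).
Local Notation pt k := (alg_iter Gf Gh rho al ga p0 k).
Local Notation dir k := (alg_dir Gf Gh rho al (pt k)).
Local Notation c := (al + 1 / (2 * Lh * ga)).

Lemma h_decrease k :
  h (pt k.+1) + ga * al * nsq (Gh (pt k)) <= h (pt k) + Lh / 2 * ga ^+ 2 * nsq (dir k).
Proof.
have := descent_lemma gradh liph (ltW Lh_gt0) (pt k) (ga *: dir k).
rewrite -alg_iterS dotEZr nsqZ.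
have := ler_wpM2l (ltW ga_gt0) (dotE_grad_dir Gf Gh al (pt k)).
lra.
Qed.

Lemma lyapunov_decrease k :
  f (pt k.+1) + c * h (pt k.+1) + ga / 4 * nsq (dir k)
  <= f (pt k) + c * h (pt k) + ga ^+ 2 * al * (Cf ^+ 2 * Lh / 2).
Proof.
have := descent_lemma gradf lipf Lf_ge0 (pt k) (ga *: dir k).
rewrite -alg_iterS dotEZr nsqZ => f_le.
have := descent_lemma gradh liph (ltW Lh_gt0) (pt k) (ga *: dir k).
rewrite -alg_iterS dotEZr nsqZ => h_le.
have gY := ler_wpM2l (ltW ga_gt0) (dotE_grad_dir Gf Gh al (pt k)).
have gXD := ler_wpM2l (ltW ga_gt0) (dotE_dir_nsq_le Gf Gh al (pt k) (ltW al_gt0) (Gf_le _)).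
set b := 1 / (2 * Lh * ga).
have b_gt0 : 0 < b by rewrite divr_gt0 // !mulr_gt0.
have young : Cf * nrm (Gh (pt k)) <= b * nsq (Gh (pt k)) + Cf ^+ 2 * Lh * ga / 2.
  have -> : b * nsq (Gh (pt k)) + Cf ^+ 2 * Lh * ga / 2
            = Lh * ga / 2 * Cf ^+ 2 + nrm (Gh (pt k)) ^+ 2 / (2 * (Lh * ga)).
    by rewrite -sqr_nrm /b; field; rewrite !gt_eqF.
  by have := mulr_le_young Cf (nrm (Gh (pt k))) (mulr_gt0 Lh_gt0 ga_gt0).
(* [b] is chosen so that the curvature term of [h] costs only a quarter of the decrease *)
have bLh : b * (Lh / 2 * (ga ^+ 2 * nsq (dir k))) = ga * nsq (dir k) / 4.
  by rewrite /b; field; rewrite !gt_eqF.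
have ch_le := ler_wpM2l (addr_ge0 (ltW al_gt0) (ltW b_gt0)) h_le.
have cY := ler_wpM2l (addr_ge0 (ltW al_gt0) (ltW b_gt0)) gY.
have step := ler_wpM2r (nsq_ge0 (dir k)) (ler_wpM2l (ltW ga_gt0) ga_small).
have ayoung := ler_wpM2l (mulr_ge0 (ltW ga_gt0) (ltW al_gt0)) young.
lra.
Qed.

Lemma sum_dir_le K :
  ga / 4 * \sum_(0 <= k < K) nsq (dir k)
  <= f p0 - fbar + c * h p0 + K%:R * (ga ^+ 2 * al * (Cf ^+ 2 * Lh / 2)).
Proof.
have := telescope_le (fun k => f (pt k) + c * h (pt k))
  (fun k => ga / 4 * nsq (dir k)) (fun=> ga ^+ 2 * al * (Cf ^+ 2 * Lh / 2)) K
  lyapunov_decrease.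
rewrite -mulr_sumr sumr_const_nat subn0 mulr_natl.
have c_gt0 : 0 < c by rewrite addr_gt0 // divr_gt0 // !mulr_gt0.
have := mulr_ge0 (ltW c_gt0) (h_ge0 (pt K)); have := f_ge (pt K).
lra.
Qed.

Lemma sum_grad_h_le K :
  ga * al * \sum_(0 <= k < K) nsq (Gh (pt k))
  <= h p0 + Lh / 2 * ga ^+ 2 * \sum_(0 <= k < K) nsq (dir k).
Proof.
have := telescope_le (fun k => h (pt k)) (fun k => ga * al * nsq (Gh (pt k)))
  (fun k => Lh / 2 * ga ^+ 2 * nsq (dir k)) K h_decrease.
rewrite -!mulr_sumr; have := h_ge0 (pt K); lra.
Qed.

Section Budget.
Context {kap C0 Delta : R} {K : nat}.
Hypotheses (kap_gt0 : 0 < kap) (kap_le : kap * al <= ga) (ga_le : ga <= al).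
Hypotheses (al_le1 : al <= 1) (alK : al ^+ 3 * K%:R = 1).
Hypotheses (C0_ge0 : 0 <= C0) (h0_le : h p0 <= al ^+ 2 * C0) (f0_le : f p0 - fbar <= Delta).
Local Notation B := (energy_bound kap Cf Lh C0 Delta).

Lemma kap_sqr_le : kap * al ^+ 2 <= ga.
Proof.
by apply: le_trans kap_le; rewrite expr2 mulrA ler_piMr // mulr_ge0 // ltW.
Qed.

Lemma sum_dir_budget : ga * \sum_(0 <= k < K) nsq (dir k) <= 4 * B.
Proof.
have al3_le1 : al ^+ 3 <= 1 by rewrite exprn_ile1 // ltW.
have ch0 : c * h p0 <= C0 + C0 / (2 * Lh * kap).
  apply: le_trans (ler_wpM2l _ h0_le) _; first by rewrite addr_ge0 ?divr_ge0 ?mulr_ge0 ?ltW.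
  rewrite mulrDl; apply: lerD; first by rewrite mulrA -exprS ler_piMl.
  rewrite ler_pdivlMr ?mulr_gt0 //.
  have -> : 1 / (2 * Lh * ga) * (al ^+ 2 * C0) * (2 * Lh * kap) = kap * al ^+ 2 * C0 / ga.
    by field; rewrite !gt_eqF.
  by rewrite ler_pdivrMr // mulrC ler_wpM2l // kap_sqr_le.
have Kga : K%:R * (ga ^+ 2 * al) <= 1.
  rewrite -[leRHS]alK mulrC; apply: ler_wpM2r => //; rewrite [al ^+ 3]exprSr.
  by apply: ler_wpM2r; [exact: ltW | rewrite ler_pXn2r ?nnegrE ?(ltW ga_gt0) ?(ltW al_gt0)].
have KCf : K%:R * (ga ^+ 2 * al * (Cf ^+ 2 * Lh / 2)) <= Cf ^+ 2 * Lh / 2.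
  by rewrite mulrA; apply: ler_piMl Kga; rewrite divr_ge0 // mulr_ge0 ?sqr_ge0 // ltW.
have := le_trans (sum_dir_le K) (lerD (lerD f0_le ch0) KCf).
rewrite /energy_bound; lra.
Qed.

Lemma sum_weighted_le cr :
  al * \sum_(0 <= k < K) (cr ^+ 2 * nsq (Gh (pt k)) + nsq (dir k))
  <= rate_const kap Cf Lh cr C0 Delta.
Proof.
rewrite big_split -mulr_sumr /= mulrDr mulrCA /rate_const.
have SD_le := sum_dir_budget; have Sr_le := sum_grad_h_le K.
have SD_ge0 : 0 <= \sum_(0 <= k < K) nsq (dir k).
  by apply: sumr_ge0 => k _; exact: nsq_ge0.
apply: lerD.
  rewrite ler_wpM2l ?sqr_ge0 // -(ler_pM2l ga_gt0) mulrDr.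
  have : al ^+ 2 * C0 <= ga * (C0 / kap).
    rewrite mulrA ler_pdivlMr // mulrAC (mulrC _ kap).
    by have := ler_wpM2r C0_ge0 kap_sqr_le.
  have := ler_wpM2l (mulr_ge0 (divr_ge0 (ltW Lh_gt0) (ler0n _ 2)) (ltW ga_gt0)) SD_le.
  have := le_trans Sr_le (lerD h0_le (lexx _)); lra.
rewrite ler_pdivlMr //; have := ler_wpM2r SD_ge0 kap_le; lra.
Qed.

Lemma exists_small_iterate cr : exists2 t, (t < K)%N &
  cr ^+ 2 * nsq (Gh (pt t)) + nsq (Gf (pt t) + alg_lambda Gf Gh rho al (pt t) *: Gh (pt t))
  <= rate_const kap Cf Lh cr C0 Delta * al ^+ 2.
Proof.
have al3_neq0 : al ^+ 3 != 0 by rewrite expf_neq0 // gt_eqF.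
have K_E : K%:R = (al ^+ 3)^-1.
  by apply: (mulfI al3_neq0); rewrite alK mulfV.
have K_gt0 : (0 < K)%N by rewrite -(ltr0n R) K_E invr_gt0 exprn_gt0.
have sum_le : \sum_(0 <= k < K) (cr ^+ 2 * nsq (Gh (pt k)) + nsq (dir k))
              <= rate_const kap Cf Lh cr C0 Delta / al.
  by rewrite ler_pdivlMr // mulrC; exact: sum_weighted_le.
have [t tK t_le] := exists_le_mean K_gt0 sum_le.
exists t => //; move: t_le; rewrite K_E /alg_dir -opprD nsqN.
have -> : rate_const kap Cf Lh cr C0 Delta / al / (al ^+ 3)^-1
          = rate_const kap Cf Lh cr C0 Delta * al ^+ 2.
  by field; rewrite gt_eqF.
by [].
Qed.

End Budget.

End Convergence.

Definition stepsize_ratio {R : realType} (Lf Lh : R) := Num.min 1 (1 / (Lf + Lh)).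

Section StepSize.
Context {R : realType} {Lf Lh al : R}.
Hypotheses (Lf_ge0 : 0 <= Lf) (Lh_gt0 : 0 < Lh) (al_gt0 : 0 < al) (al_le1 : al <= 1).
Local Notation ga := (Num.min al (1 / (Lf + al * Lh))).

Lemma stepsize_ratio_gt0 : 0 < stepsize_ratio Lf Lh.
Proof. by rewrite /stepsize_ratio lt_min ltr01 divr_gt0 // ltr_wpDl. Qed.

Lemma stepsize_gt0 : 0 < ga.
Proof. by rewrite lt_min al_gt0 divr_gt0 // ltr_wpDl // mulr_gt0. Qed.

Lemma stepsize_le : ga <= al.
Proof. by rewrite ge_min lexx. Qed.

Lemma stepsize_small : ga * (Lf + al * Lh) <= 1.
Proof.
have pos : 0 < Lf + al * Lh by rewrite ltr_wpDl // mulr_gt0.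
by rewrite -ler_pdivlMr // ge_min lexx orbT.
Qed.

Lemma stepsize_ratio_le : stepsize_ratio Lf Lh * al <= ga.
Proof.
have ratio_ge0 := ltW stepsize_ratio_gt0.
rewrite le_min; apply/andP; split.
  by rewrite ler_piMl ?(ltW al_gt0) // /stepsize_ratio ge_min lexx.
apply: (@le_trans _ _ (stepsize_ratio Lf Lh)); first by rewrite ler_piMr.
apply: (@le_trans _ _ (1 / (Lf + Lh))).
  by rewrite /stepsize_ratio ge_min lexx orbT.
rewrite !div1r lef_pV2 ?posrE ?ltr_wpDl ?mulr_gt0 // lerD2l.
by rewrite ler_piMl // ltW.
Qed.

End StepSize.

Lemma rate_const_gt0 {R : realType} {kap Cf Lh cr C0 Delta : R} :
  0 < kap -> 0 < Lh -> 0 < C0 -> 0 <= Delta ->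
  0 < rate_const kap Cf Lh cr C0 Delta.
Proof.
move=> kap_gt0 Lh_gt0 C0_gt0 Delta_ge0.
have kap_ge0 := ltW kap_gt0; have Lh_ge0 := ltW Lh_gt0; have C0_ge0 := ltW C0_gt0.
have B_gt0 : 0 < energy_bound kap Cf Lh C0 Delta.
  have : 0 <= C0 / (2 * Lh * kap) by rewrite divr_ge0 // !mulr_ge0.
  have : 0 <= Cf ^+ 2 * Lh / 2 by rewrite divr_ge0 // mulr_ge0 ?sqr_ge0.
  rewrite /energy_bound; lra.
have : 0 <= cr ^+ 2 * (C0 / kap + 2 * Lh * energy_bound kap Cf Lh C0 Delta).
  by rewrite mulr_ge0 ?sqr_ge0 // addr_ge0 ?divr_ge0 // !mulr_ge0 // ltW.
have : 0 < 4 * energy_bound kap Cf Lh C0 Delta / kap by rewrite divr_gt0 ?mulr_gt0.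
rewrite /rate_const; lra.
Qed.

Section InverseCubeRoot.
Context {R : realType}.

Lemma expr3_powR_cbrtN (K : R) : 0 <= K -> (K `^ (- (1 / 3))) ^+ 3 = K^-1.
Proof.
move=> K_ge0; rewrite -powR_mulrn ?powR_ge0 // -powRrM.
have -> : - (1 / 3) * 3%:R = (1 *- 1 : R) by rewrite mulr1n; field.
by rewrite powR_invn // expr1.
Qed.

Lemma powR_cbrtN_le1 {K : R} : 1 <= K -> K `^ (- (1 / 3)) <= 1.
Proof.
move=> K_ge1; rewrite leNgt; apply/negP => /(@exprn_egt1 _ 3) /=.
by rewrite expr3_powR_cbrtN ?invf_gt1; lra.
Qed.

Lemma mul_sqr_powR_cbrtN_le {M eps K : R} : 0 < M -> 0 < eps ->
  M `^ (3 / 2) * eps `^ (- (3 / 2)) <= K -> M * (K `^ (- (1 / 3))) ^+ 2 <= eps.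
Proof.
move=> M_gt0 eps_gt0; set y := _ * _ => y_le.
have y_gt0 : 0 < y by rewrite mulr_gt0 ?powR_gt0.
have K_gt0 : 0 < K := lt_le_trans y_gt0 y_le.
have M_ge0 := ltW M_gt0; have eps_ge0 := ltW eps_gt0.
have y2E : y ^+ 2 = M ^+ 3 / eps ^+ 3.
  rewrite /y exprMn -(powR_mulrn 2 (powR_ge0 M _)) -(powR_mulrn 2 (powR_ge0 eps _)).
  rewrite -!powRrM.
  have -> : 3 / 2 * 2%:R = (3%:R : R) by field.
  have -> : - (3 / 2) * 2%:R = (1 *- 3 : R) by rewrite -mulNrn; field.
  by rewrite powR_mulrn // powR_invn.
rewrite mulrC -ler_pdivlMr // -(@ler_pXn2r _ 3) ?nnegrE ?sqr_ge0 ?divr_ge0 //.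
rewrite -exprM mulnC exprM expr3_powR_cbrtN ?(ltW K_gt0) // exprVn.
have -> : (eps / M) ^+ 3 = (y ^+ 2)^-1 by rewrite y2E; field; rewrite !gt_eqF.
by rewrite lef_pV2 ?posrE ?exprn_gt0 // ler_pXn2r ?nnegrE ?(ltW y_gt0) ?(ltW K_gt0).
Qed.

End InverseCubeRoot.

Theorem mainTheorem4 (R : realType) (n m : nat)
  (f g : E R n m -> R) (Gf Gg Gh : E R n m -> E R n m)
  (fbar Lf Cf Lh cr C0 Delta : R) :
  (* standing setting on f *)
  is_gradient f Gf -> continuous Gf ->
  (forall p, fbar <= f p) -> (forall e, 0 < e -> exists p, f p < fbar + e) ->
  0 <= Lf -> lipschitz_field Gf Lf ->
  (forall p, nrm (Gf p) <= Cf) ->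
  (* standing setting on g and h := ||grad_y g||^2 *)
  is_gradient g Gg -> C1_field Gg ->
  let h := fun p => nsqr (Gg p).2 in
  is_gradient h Gh -> continuous Gh ->
  0 < Lh -> lipschitz_field Gh Lh ->
  (* regularity condition *)
  0 < cr -> (forall p, Num.sqrt (nsqr (Gg p).2) <= cr * nrm (Gh p)) ->
  0 < C0 -> 0 <= Delta ->
  let rho := fun p => nsq (Gh p) in
  exists C : R, 0 < C /\
  forall eps : R, 0 < eps ->
  exists K : nat, (1 <= K)%N /\ K%:R <= C * eps `^ (- (3 / 2)) + 1 /\
  let alpha := K%:R `^ (- (1 / 3)) in
  let gamma := Num.min alpha (1 / (Lf + alpha * Lh)) in
  forall p0 : E R n m, h p0 <= alpha ^+ 2 * C0 -> f p0 - fbar <= Delta ->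
  exists t : nat, (t < K)%N /\
    let pt := alg_iter Gf Gh rho alpha gamma p0 t in
    let lt := alg_lambda Gf Gh rho alpha pt in
    Num.max (nsqr (Gg pt).2)
            (nsq (Gf pt + lt *: Gh pt)) <= eps.
Proof.
move=> gradf _ f_ge _ Lf_ge0 lipf Gf_le _ _ h gradh _ Lh_gt0 liph _ reg C0_gt0 Delta_ge0 rho.
pose kap := stepsize_ratio Lf Lh; pose M := rate_const kap Cf Lh cr C0 Delta.
have kap_gt0 : 0 < kap := stepsize_ratio_gt0 Lf_ge0 Lh_gt0.
have M_gt0 : 0 < M := rate_const_gt0 kap_gt0 Lh_gt0 C0_gt0 Delta_ge0.
exists (M `^ (3 / 2)); split; first exact: powR_gt0.
move=> eps eps_gt0; set y := M `^ (3 / 2) * eps `^ (- (3 / 2)).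
have /andP[y_ge y_lt] := truncn_itv (mulr_ge0 (powR_ge0 M _) (powR_ge0 eps _) : 0 <= y).
exists (Num.truncn y).+1; split => //; split; first by rewrite -natr1; lra.
move=> al ga p0 h0_le f0_le.
have K_ge1 : 1 <= (Num.truncn y).+1%:R :> R by rewrite ler1n.
have K_gt0 : 0 < (Num.truncn y).+1%:R :> R := lt_le_trans ltr01 K_ge1.
have al_gt0 : 0 < al by rewrite powR_gt0.
have alK : al ^+ 3 * (Num.truncn y).+1%:R = 1.
  by rewrite expr3_powR_cbrtN ?mulVf ?gt_eqF ?ltW.
have [t tK t_le] := exists_small_iterate gradf lipf Lf_ge0 f_ge Gf_le gradh liph Lh_gt0
  (fun p => dotr_ge0 (Gg p).2) al_gt0 (stepsize_gt0 Lf_ge0 Lh_gt0 al_gt0)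
  (stepsize_small Lf_ge0 Lh_gt0 al_gt0) kap_gt0
  (stepsize_ratio_le Lf_ge0 Lh_gt0 al_gt0 (powR_cbrtN_le1 K_ge1))
  stepsize_le (powR_cbrtN_le1 K_ge1) alK (ltW C0_gt0) h0_le f0_le cr.
exists t; split => // pt lt.
have rate_le : M * al ^+ 2 <= eps := mul_sqr_powR_cbrtN_le M_gt0 eps_gt0 (ltW y_lt).
have h_le : h pt <= cr ^+ 2 * nsq (Gh pt).
  by rewrite -sqr_nrm -exprMn; apply: le_sqr_of_sqrtr_le; [exact: dotr_ge0 | exact: reg].
rewrite ge_max; apply/andP; split; apply: le_trans rate_le; apply: le_trans t_le.
  by apply: le_trans h_le _; rewrite lerDl nsq_ge0.
by rewrite lerDr mulr_ge0 ?sqr_ge0 ?nsq_ge0.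
Qed.
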